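(* Let $X$ be a set and $\beta_P\in\Im(P(X))$. Then there exists a fuzzifying topology $T\in\Im(P(X))$ on $X$ such that $\beta_P$ is a pre-base of $T$ if and only if the following two conditions hold: (1) $\beta_P^{(\cup)}(X)=1$, where $\beta_P^{(\cup)}(A)=\bigvee\{\bigwedge_{\lambda\in\Lambda}\beta_P(B_\lambda):\bigcup_{\lambda\in\Lambda}B_\lambda=A\}$; (2) for all $A,B\subseteq X$ and all $x\in A\cap B$, $\min(\beta_P(A),\beta_P(B))\le\sup\{\beta_P(C): x\in C\subseteq A\cap B\}$.
   Context: $\Im(Y)$ denotes the fuzzy subsets $Y\to[0,1]$ and $P(X)$ the power set. A fuzzifying topology on $X$ is $T\in\Im(P(X))$ with $T(X)=1$, $T(A\cap B)\ge\min(T(A),T(B))$ and $T(\bigcup_\lambda A_\lambda)\ge\inf_\lambda T(A_\lambda)$ for arbitrary families. Here $\beta_P$ is called a pre-base of $T$ if $\beta_P(A)\le T(A)$ for all $A$ and, for all $x\in X$ and $A\subseteq X$, $\sup_{x\in B\subseteq A}T(B)\le\sup_{x\in B\subseteq A}\beta_P(B)$. (Condition (2) is the Łukasiewicz-valid formula $\vDash (A\in\beta_P)\wedge(B\in\beta_P)\wedge(x\in A\cap B)\to\exists C((C\in\beta_P)\wedge(x\in C\subseteq A\cap B))$, where $[\varphi\wedge\psi]=\min$, $[\exists]=\sup$, $[\varphi\to\psi]=\min(1,1-[\varphi]+[\psi])$ and $\vDash$ means truth value $1$.) *)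

From HB Require Import structures.
From mathcomp Require Import all_boot all_order all_algebra.
From mathcomp Require Import boolp classical_sets reals.
Set Implicit Arguments. Unset Strict Implicit. Unset Printing Implicit Defensive.
Import Order.TTheory GRing.Theory Num.Theory.
Local Open Scope classical_set_scope.
Local Open Scope ring_scope.

Section Fuzzy.
Variable R : realType.

Definition fuzzy_set (Y : Type) (f : Y -> R) : Prop :=
  forall y, 0 <= f y <= 1.

(* Supremum / infimum in the complete lattice [0,1] (sup of empty = 0,
   inf of empty = 1), for subsets S of [0,1]. *)
Definition sup01 (S : set R) : R := sup (S `|` [set 0]).
Definition inf01 (S : set R) : R := inf (S `|` [set 1]).

Variable X : Type.

Definition fuzzifying_topology (T : set X -> R) : Prop :=
  [/\ fuzzy_set T,
      T setT = 1,
      (forall A B : set X, T (A `&` B) >= Order.min (T A) (T B)) &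
      (forall (I : Type) (F : I -> set X),
          T (\bigcup_(i in [set: I]) F i) >= inf01 [set T (F i) | i in [set: I]])].

Definition prebase (beta T : set X -> R) : Prop :=
  (forall A, beta A <= T A) /\
  (forall (x : X) (A : set X),
      sup01 [set T B | B in [set B | B x /\ B `<=` A]]
      <= sup01 [set beta B | B in [set B | B x /\ B `<=` A]]).

Definition beta_union (beta : set X -> R) (A : set X) : R :=
  sup01 [set r | exists (I : Type) (F : I -> set X),
           \bigcup_(i in [set: I]) F i = A /\
           r = inf01 [set beta (F i) | i in [set: I]]].

Definition prebase_cond2 (beta : set X -> R) : Prop :=
  forall (A B : set X) (x : X), (A `&` B) x ->
    Order.min (beta A) (beta B)
    <= sup01 [set beta C | C in [set C | C x /\ C `<=` A `&` B]].

End Fuzzy.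

From mathcomp Require Import all_boot all_order all_algebra.
From mathcomp Require Import boolp classical_sets reals.
Set Implicit Arguments. Unset Strict Implicit. Unset Printing Implicit Defensive.
Import Order.TTheory GRing.Theory Num.Theory.
Local Open Scope classical_set_scope.
Local Open Scope ring_scope.

(* Write N^f_x(A) for the supremum of f C over the C with x in C included
   in A; the second prebase clause says N^T_x <= N^beta_x.
   Sufficiency: T(A) = inf_{x in A} N^beta_x(A) works.  Condition (1) gives
   T(X) = 1, condition (2) gives min(T A, T B) <= T(A cap B), and unions are
   free because N^beta_x is monotone in A.
   Necessity: (2) is the chain min(beta A, beta B) <= min(T A, T B)
   <= T(A cap B) <= N^T_x(A cap B) <= N^beta_x(A cap B).  For (1), given
   a < 1 = T(X) <= N^beta_x(X), every x lies in some B with beta B > a, and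
   these B cover X with infimum at least a. *)

Section UnitIntervalSupInf.
Variable R : realType.
Implicit Types (S : set R) (a r : R).

Lemma sup01_ge0 S : 0 <= sup01 S.
Proof.
have [[u ub]|unbounded] := pselect (has_ubound (S `|` [set 0])).
  by apply: ub_le_sup; [exists u | right].
by rewrite /sup01 sup_out // => -[].
Qed.

Lemma sup01_ub S r : ubound S 1 -> S r -> r <= sup01 S.
Proof. by move=> S1 Sr; apply: ub_le_sup; [exists 1 => s [/S1|->] | left]. Qed.

Lemma ge_sup01 S a : 0 <= a -> ubound S a -> sup01 S <= a.
Proof. by move=> a0 Sa; apply: ge_sup; [exists 0; right | move=> s [/Sa|->]]. Qed.

Lemma sup01_gt S a : 0 <= a -> a < sup01 S -> exists2 r, S r & a < r.
Proof.
move=> a0 /sup_gt [|r [Sr|->] ar]; [by exists 0; right | by exists r |].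
by move: (le_lt_trans a0 ar); rewrite ltxx.
Qed.

Lemma inf01_le1 S : inf01 S <= 1.
Proof.
have [[l lb]|unbounded] := pselect (has_lbound (S `|` [set 1])).
  by apply: ge_inf; [exists l | right].
by rewrite /inf01 inf_out // => -[].
Qed.

Lemma inf01_lb S r : lbound S 0 -> S r -> inf01 S <= r.
Proof. by move=> S0 Sr; apply: ge_inf; [exists 0 => s [/S0|->] | left]. Qed.

Lemma le_inf01 S a : a <= 1 -> lbound S a -> a <= inf01 S.
Proof. by move=> a1 Sa; apply: lb_le_inf; [exists 1; right | move=> s [/Sa|->]]. Qed.

Lemma ge0_le_from_below (x y : R) :
  0 <= y -> (forall z, 0 <= z -> z < x -> z <= y) -> x <= y.
Proof.
move=> y0 xy; rewrite leNgt; apply/negP => yx.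
have [y_mid mid_x] := midf_lt yx.
by have := xy _ (le_trans y0 (ltW y_mid)) mid_x; rewrite leNgt y_mid.
Qed.

End UnitIntervalSupInf.

Section FuzzyImage.
Variables (R : realType) (Y : Type) (f : Y -> R).
Hypothesis f01 : fuzzy_set f.

Lemma fuzzy_ge0 y : 0 <= f y. Proof. by case/andP: (f01 y). Qed.
Lemma fuzzy_le1 y : f y <= 1. Proof. by case/andP: (f01 y). Qed.

Lemma fuzzy_image_ub1 (I : Type) (g : I -> Y) (A : set I) :
  ubound [set f (g i) | i in A] 1.
Proof. by move=> _ [i _ <-]; apply: fuzzy_le1. Qed.

Lemma fuzzy_image_lb0 (I : Type) (g : I -> Y) (A : set I) :
  lbound [set f (g i) | i in A] 0.
Proof. by move=> _ [i _ <-]; apply: fuzzy_ge0. Qed.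

End FuzzyImage.

Section BetaUnion.
Variables (R : realType) (X : Type) (beta : set X -> R).

Lemma beta_union_le1 A : beta_union beta A <= 1.
Proof. by apply: ge_sup01 => // _ [I [F [_ ->]]]; apply: inf01_le1. Qed.

Lemma beta_union_ge (I : Type) (F : I -> set X) A :
  \bigcup_(i in [set: I]) F i = A ->
  inf01 [set beta (F i) | i in [set: I]] <= beta_union beta A.
Proof.
move=> UF; apply: sup01_ub; last by exists I, F.
by move=> _ [J [G [_ ->]]]; apply: inf01_le1.
Qed.

End BetaUnion.

Section PrebaseTopology.
Variables (R : realType) (X : Type) (beta : set X -> R).
Implicit Types (A B C : set X) (x : X).

Definition nbhd_degree A x : R :=
  sup01 [set beta C | C in [set C | C x /\ C `<=` A]].

Definition prebase_topology A : R := inf01 [set nbhd_degree A x | x in A].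

Lemma nbhd_degree_ge0 A x : 0 <= nbhd_degree A x.
Proof. exact: sup01_ge0. Qed.

Lemma nbhd_image_lb0 A : lbound [set nbhd_degree A x | x in A] 0.
Proof. by move=> _ [x _ <-]; apply: nbhd_degree_ge0. Qed.

Lemma prebase_topology_le_nbhd A x :
  A x -> prebase_topology A <= nbhd_degree A x.
Proof. by move=> Ax; apply: inf01_lb; [apply: nbhd_image_lb0 | exists x]. Qed.

Lemma prebase_topology_fuzzy : fuzzy_set prebase_topology.
Proof. by move=> A; rewrite inf01_le1 andbT; apply/le_inf01/nbhd_image_lb0. Qed.

Hypothesis beta01 : fuzzy_set beta.

Lemma le_nbhd_degree A C x : C x -> C `<=` A -> beta C <= nbhd_degree A x.
Proof.
by move=> Cx CA; apply: sup01_ub; [exact: (fuzzy_image_ub1 beta01) | exists C].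
Qed.

Lemma nbhd_degreeS A A' x : A `<=` A' -> nbhd_degree A x <= nbhd_degree A' x.
Proof.
move=> AA'; apply: ge_sup01; first exact: nbhd_degree_ge0.
by move=> _ [C [Cx CA] <-]; apply: le_nbhd_degree => // y /CA /AA'.
Qed.

Lemma prebase_topologyT :
  beta_union beta setT = 1 -> prebase_topology setT = 1.
Proof.
move=> cover1; apply/le_anti; rewrite inf01_le1 /=.
apply: ge0_le_from_below => [|a a0 a1]; first exact: (fuzzy_ge0 prebase_topology_fuzzy).
apply: le_inf01 (ltW a1) _ => _ [x _ <-].
rewrite -cover1 in a1; have [_ [I [F [UF ->]]] aF] := sup01_gt a0 a1.
have [i _ Fix] : (\bigcup_(i in [set: I]) F i) x by rewrite UF.
apply: le_trans (ltW aF) (le_trans _ (le_nbhd_degree Fix (@subsetT _ _))).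
by apply: inf01_lb; [exact: (fuzzy_image_lb0 beta01) | exists i].
Qed.

Lemma prebase_topologyI A B :
  prebase_cond2 beta ->
  Order.min (prebase_topology A) (prebase_topology B)
    <= prebase_topology (A `&` B).
Proof.
move=> cond2; apply: le_inf01 => [|_ [x [Ax Bx] <-]].
  by rewrite ge_min inf01_le1.
apply: ge0_le_from_below => [|a a0]; first exact: nbhd_degree_ge0.
rewrite lt_min => /andP[/lt_le_trans aA /lt_le_trans aB].
have [_ [C [Cx CA] <-] aC] := sup01_gt a0 (aA _ (prebase_topology_le_nbhd Ax)).
have [_ [D [Dx DB] <-] aD] := sup01_gt a0 (aB _ (prebase_topology_le_nbhd Bx)).
have a_le_CD : a <= Order.min (beta C) (beta D) by rewrite le_min !ltW.
apply: le_trans a_le_CD (le_trans (cond2 C D x (conj Cx Dx)) _).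
by apply: nbhd_degreeS => y [/CA Ay /DB By].
Qed.

Lemma prebase_topology_bigcup (I : Type) (F : I -> set X) :
  inf01 [set prebase_topology (F i) | i in [set: I]]
    <= prebase_topology (\bigcup_(i in [set: I]) F i).
Proof.
apply: le_inf01 => [|_ [x [i _ Fix] <-]]; first exact: inf01_le1.
apply: le_trans (inf01_lb _ _) _.
- exact: (fuzzy_image_lb0 prebase_topology_fuzzy).
- by exists i.
- apply: le_trans (prebase_topology_le_nbhd Fix) (nbhd_degreeS _ _).
  by move=> y Fiy; exists i.
Qed.

Lemma prebase_topology_fuzzifying :
  beta_union beta setT = 1 -> prebase_cond2 beta ->
  fuzzifying_topology prebase_topology.
Proof.
move=> cover1 cond2; split.
- exact: prebase_topology_fuzzy.
- exact: prebase_topologyT.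
- by move=> A B; apply: prebase_topologyI.
- exact: prebase_topology_bigcup.
Qed.

Lemma prebase_prebase_topology : prebase beta prebase_topology.
Proof.
split=> [A|x A].
  apply: le_inf01 => [|_ [x Ax <-]]; first exact: fuzzy_le1.
  exact: le_nbhd_degree.
apply: ge_sup01 => [|_ [B [Bx BA] <-]]; first exact: nbhd_degree_ge0.
exact: le_trans (prebase_topology_le_nbhd Bx) (nbhd_degreeS _ BA).
Qed.

End PrebaseTopology.

Section PrebaseConditions.
Variables (R : realType) (X : Type) (beta T : set X -> R).
Hypotheses (T_top : fuzzifying_topology T) (beta_T : prebase beta T).

Lemma prebase_cond2_of_topology : prebase_cond2 beta.
Proof.
have [T01 _ TI _] := T_top; have [le_beta_T le_nbhd] := beta_T.
move=> A B x ABx; apply: le_trans (le_nbhd x (A `&` B)).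
have min_beta_le_T : Order.min (beta A) (beta B) <= Order.min (T A) (T B).
  by rewrite le_min !ge_min !le_beta_T orbT.
apply: le_trans min_beta_le_T (le_trans (TI A B) _).
exact: (le_nbhd_degree T01).
Qed.

Lemma beta_unionT_of_topology : beta_union beta setT = 1.
Proof.
have [T01 TX _ _] := T_top; have [_ le_nbhd] := beta_T.
apply/le_anti; rewrite beta_union_le1 /=.
apply: ge0_le_from_below => [|a a0 a1]; first exact: sup01_ge0.
pose I := {B : set X | exists x, B x /\ a < beta B}.
have cover : \bigcup_(i in [set: I]) sval i = setT.
  apply/seteqP; split=> // x _.
  have : a < nbhd_degree beta setT x.
    have TX_le : T setT <= nbhd_degree T setT x by apply: le_nbhd_degree.
    by rewrite (lt_le_trans a1) // -TX (le_trans TX_le (le_nbhd x setT)).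
  case/(sup01_gt a0) => _ [B [Bx _] <-] aB.
  by exists (exist _ B (ex_intro _ x (conj Bx aB))).
apply: le_trans _ (beta_union_ge beta cover).
apply: le_inf01 (ltW a1) _ => _ [i _ <-].
by have [x [_ /ltW]] := svalP i.
Qed.

End PrebaseConditions.

Theorem theorem2p2 (R : realType) (X : Type) (beta : set X -> R) :
  fuzzy_set beta ->
  ((exists T : set X -> R, fuzzifying_topology T /\ prebase beta T) <->
   (beta_union beta setT = 1 /\ prebase_cond2 beta)).
Proof.
move=> beta01; split.
  case=> T [T_top beta_T]; split.
  - exact: beta_unionT_of_topology T_top beta_T.
  - exact: prebase_cond2_of_topology T_top beta_T.
case=> cover1 cond2; exists (prebase_topology beta); split.
- exact: prebase_topology_fuzzifying.
- exact: prebase_prebase_topology.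
Qed.
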